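(* Let $\Gamma$ be an elliptic graph with NN-elliptic sequence $\{B_j\}$ and cycles $C_j$. For any $-1\le j\le m-1$ and any $\ell\in Supp_j(P_0)$ one has $\ell_v\ge0$ for all $v\in\mathcal V(B_{j+1})$ and $\ell_v<0$ for all $v\in\mathcal V(\Gamma)\setminus\mathcal V(B_{j+1})$.
   Context: Let $\Gamma$ be a finite connected tree with vertex set $\mathcal V$, each vertex $v$ decorated by an integer $e_v$ (genera zero). $L=\mathbb Z\langle E_v\rangle$ with form $(E_v,E_v)=e_v$, $(E_v,E_w)=1$ for adjacent $v\ne w$, $0$ otherwise, assumed negative definite; $L'$ the dual lattice, $[l']$ the class in $L'/L$; $E_v^*$ with $(E_v^*,E_w)=-\delta_{vw}$; $\delta_v$ valency; $E=\sum E_v$; $\ge$ coordinatewise, $\prec$ strict in all coordinates, $l>0$ if $l\ge0,l\ne0$; $|l'|$ the support. $Z_K$ with $(Z_K,E_v)=e_v+2$; $\chi(l')=-(l',l'-Z_K)/2$. $\mathcal S'=\{l':(l',E_v)\le0\ \forall v\}$, $s_h=\min\{l'\in\mathcal S':[l']=h\}$; $Z_{min}(B)$ the minimal nonzero element of $\mathcal S'(B)\cap L(B)$. $Z(\mathbf t)=\sum z(l')\mathbf t^{l'}$ the Taylor expansion at $0$ of $\prod_v(1-\mathbf t^{E_v^*})^{\delta_v-2}$; $P_0(\mathbf t)=\sum_{\ell\in L,\ell\not\prec0}w(\ell)\mathbf t^\ell$, $w(\ell)=z(Z_K-E-\ell)$, $Supp(P_0)=\{\ell\not\prec0:w(\ell)\ne0\}$.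 Elliptic graph: $e_v\le-2$ for all $v$, $\min_{l\in L,l>0}\chi(l)=0$. NN-elliptic sequence: $B_{-1}=\Gamma$, $Z_{B_{-1}}=s_{[Z_K]}$, $B_0=|Z_K-s_{[Z_K]}|$; for $j\ge0$, $Z_{B_j}=Z_{min}(B_j)$, and if $Z_K-\sum_{i=-1}^jZ_{B_i}\ne0$ then $B_{j+1}=|Z_K-\sum_{i=-1}^jZ_{B_i}|$; $m$ is the index with $Z_K=\sum_{i=-1}^mZ_{B_i}$; $C_j=\sum_{i=-1}^jZ_{B_i}$. For $\ell\in Supp(P_0)$ with $\mathcal V^{<0}(\ell)=\{v:\ell_v<0\}$, the associated cycle is the unique $l'$ with $\ell=Z_K-E-l'-\sum_{v\in\mathcal V^{<0}(\ell)}m_vE_v$, $l'\le Z_K$, $l'_v=(Z_K)_v$ on $\mathcal V^{<0}(\ell)$, $m_v\in\mathbb Z_{\ge0}$; $Supp_j(P_0)$ is the set of $\ell$ with associated cycle $C_j$. *)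

From HB Require Import structures.
From mathcomp Require Import all_boot all_order all_algebra.
From Stdlib Require Import ClassicalEpsilon.
Set Implicit Arguments. Unset Strict Implicit. Unset Printing Implicit Defensive.
Import Order.TTheory GRing.Theory Num.Theory.
Local Open Scope ring_scope.

(* Vectors of L (x) Q are rational coordinate vectors in the basis (E_v)_v. *)
Notation vec V := {ffun V -> rat}.

Section Plumbing.
Variables (V : finType) (adj : rel V) (e : V -> int).

Definition Eb (v : V) : vec V := [ffun u => (u == v)%:R].
Definition Ebig : vec V := [ffun _ => 1].

Definition imat (v w : V) : rat :=
  if v == w then (e v)%:~R else if adj v w then 1 else 0.

Definition iform (x y : vec V) : rat :=
  \sum_(v : V) \sum_(w : V) x v * y w * imat v w.

Definition lev (x y : vec V) : bool := [forall v, x v <= y v].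
Definition gt0v (x : vec V) : bool := lev 0 x && (x != 0).
Definition precneg (x : vec V) : bool := [forall v, x v < 0].

Definition supp (x : vec V) : {set V} := [set v | x v != 0].

Definition inL (x : vec V) : bool := [forall v, x v \is a Num.int].
Definition inL' (x : vec V) : bool := [forall w, iform x (Eb w) \is a Num.int].

Definition is_tree : Prop :=
  [/\ (forall v w, adj v w = adj w v), (forall v, ~~ adj v v),
      (forall v w, connect adj v w), (0 < #|V|)%N &
      #|[set p : V * V | adj p.1 p.2]| = (2 * (#|V| - 1))%N].

Definition neg_def : Prop := forall x : vec V, inL x -> x != 0 -> iform x x < 0.

Definition chi (ZK x : vec V) : rat := - iform x (x - ZK) / 2%:R.

Definition elliptic (ZK : vec V) : Prop :=
  [/\ (forall v, e v <= -2),
      (forall l, inL l -> gt0v l -> 0 <= chi ZK l) &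
      (exists l, [/\ inL l, gt0v l & chi ZK l = 0])].

Definition deg (v : V) : nat := #|[set w | adj v w]|.

(* coefficient of x^k in the Taylor expansion at 0 of (1 - x)^n, n : int *)
Definition gbin (n : int) (k : nat) : rat :=
  (-1) ^+ k * (\prod_(i < k) (n%:~R - i%:R)) / (k`!)%:R.

(* z(l') : coefficient of t^{l'} in prod_v (1 - t^{E_v^*})^{delta_v - 2};
   the monomials t^{E_v^*} are independent, so this is prod_v gbin(delta_v-2, k_v)
   if l' = sum_v k_v E_v^* with k_v in N, and 0 otherwise. *)
Definition zcoef (Estar : V -> vec V) (l : vec V) : rat :=
  match excluded_middle_informative
          (exists k : V -> nat, l = \sum_(v : V) Estar v *+ k v) with
  | left H => let k := proj1_sig (constructive_indefinite_description _ H) in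
              \prod_(v : V) gbin ((deg v)%:Z - 2) (k v)
  | right _ => 0
  end.

Definition inS' (x : vec V) : bool := inL' x && [forall v, iform x (Eb v) <= 0].

Definition is_sZK (ZK s : vec V) : Prop :=
  [/\ inS' s, inL (s - ZK) &
      forall y, inS' y -> inL (y - ZK) -> lev s y].

(* elements of S'(B) cap L(B) for the full subgraph on B *)
Definition inSLB (B : {set V}) (x : vec V) : bool :=
  [&& inL x, supp x \subset B & [forall v in B, iform x (Eb v) <= 0]].

Definition is_Zmin (B : {set V}) (z : vec V) : Prop :=
  [/\ inSLB B z, z != 0 &
      forall y, inSLB B y -> y != 0 -> lev z y].

(* Index shift: Bs k = B_{k-1}, Zs k = Z_{B_{k-1}}, M = m + 1.
   Csum Zs k = sum_{i <= k} Zs i = C_{k-1}. *)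
Definition Csum (Zs : nat -> vec V) (k : nat) : vec V := \sum_(i < k.+1) Zs i.

Definition is_NNseq (ZK : vec V) (Bs : nat -> {set V}) (Zs : nat -> vec V)
    (M : nat) : Prop :=
  [/\ Bs 0%N = [set: V], is_sZK ZK (Zs 0%N) &
      Bs 1%N = supp (ZK - Zs 0%N)] /\
  [/\
      (forall k, (1 <= k <= M)%N -> is_Zmin (Bs k) (Zs k)),
      (forall k, (k < M)%N -> Csum Zs k != ZK /\ Bs k.+1 = supp (ZK - Csum Zs k)) &
      Csum Zs M = ZK].

Definition inSuppP0 (Estar : V -> vec V) (ZK l : vec V) : Prop :=
  [/\ inL l, ~~ precneg l & zcoef Estar (ZK - Ebig - l) != 0].

Definition Vneg (l : vec V) : {set V} := [set v | l v < 0].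

Definition assoc_cycle (ZK l l' : vec V) : Prop :=
  [/\ inL' l', lev l' ZK, (forall v, v \in Vneg l -> l' v = ZK v) &
      exists mm : V -> nat,
        l = ZK - Ebig - l' - \sum_(v in Vneg l) Eb v *+ mm v].

End Plumbing.

From HB Require Import structures.
From mathcomp Require Import all_boot all_order all_algebra.
From mathcomp Require Import ring.
Import Order.TTheory GRing.Theory Num.Theory.
Local Open Scope ring_scope.

(* Outside V^{<0}(l) the correction term in the definition of the associated
   cycle C vanishes, so there l = Z_K - E - C and l_v = -1 wherever C_v equals
   (Z_K)_v; inside V^{<0}(l), C agrees with Z_K by definition.  Hence V^{<0}(l)
   is exactly the locus where C_v = (Z_K)_v, the complement of the support of
   Z_K - C_j, which is B_{j+1}. *)

Lemma sum_EbMn_notin (V : finType) (A : {set V}) (mm : V -> nat) (v : V) :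
  v \notin A -> (\sum_(u in A) Eb u *+ mm u) v = 0.
Proof.
move=> vNA; rewrite sum_ffunE big1 // => u uA.
rewrite ffunMnE ffunE; case: eqP => [vu|]; last by rewrite mul0rn.
by move: vNA; rewrite vu uA.
Qed.

Lemma Vneg_assoc_cycle (V : finType) (adj : rel V) (e : V -> int)
    (ZK l C : {ffun V -> rat}) :
  assoc_cycle adj e ZK l C -> Vneg l = ~: supp (ZK - C).
Proof.
case=> _ _ CE [mm def_l]; apply/setP => v.
rewrite !inE !ffunE subr_eq0 negbK.
have [l_neg|l_ge0] := ltP (l v) 0.
  by rewrite (CE v) ?inE ?eqxx.
apply/esym/negbTE/eqP => Cv.
have vNneg : v \notin Vneg l by rewrite inE -leNgt.
have lv : l v = -1 by rewrite def_l !ffunE sum_EbMn_notin // Cv; ring.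
by move: l_ge0; rewrite lv.
Qed.

Theorem mainTheorem15 (V : finType) (adj : rel V) (e : V -> int)
  (Estar : V -> {ffun V -> rat}) (ZK : {ffun V -> rat})
  (Bs : nat -> {set V}) (Zs : nat -> {ffun V -> rat}) (M : nat) :
  is_tree adj ->
  neg_def adj e ->
  (forall v w, iform adj e (Estar v) (Eb w) = - (v == w)%:R) ->
  (forall v, iform adj e ZK (Eb v) = (e v + 2)%:~R) ->
  elliptic adj e ZK ->
  is_NNseq adj e ZK Bs Zs M ->
  forall k : nat, (k < M)%N ->
  forall l : {ffun V -> rat},
    inSuppP0 adj Estar ZK l ->
    assoc_cycle adj e ZK l (Csum Zs k) ->
    (forall v, v \in Bs k.+1 -> 0 <= l v) /\
    (forall v, v \notin Bs k.+1 -> l v < 0).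
Proof.
move=> _ _ _ _ _ [_ [_ defB _]] k lt_kM l _ /Vneg_assoc_cycle def_Vneg.
have [_ ->] := defB k lt_kM.
split=> v vB.
  have : v \notin Vneg l by rewrite def_Vneg inE vB.
  by rewrite inE -leNgt.
have : v \in Vneg l by rewrite def_Vneg inE vB.
by rewrite inE.
Qed.
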